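(* Let $G=(V,E)$ be a connected Eulerian digraph and $s\in V$ any vertex. Then the degree of the parking function enumerator ${\rm park}_{G,s}$ equals $|E|-|V|+1-{\rm minfas}(G)$, where ${\rm minfas}(G)$ is the minimum cardinality of a feedback arc set of $G$. Equivalently, in the greedoid polynomial of the branching greedoid of $G$ rooted at $s$, the coefficient of $x^i$ is zero for $i=0,\dots,{\rm minfas}(G)-1$ and nonzero for $i={\rm minfas}(G)$. *)

(* A digraph is given by finite vertex/arc types and
   source/target maps (multiple arcs and loops allowed). *)
From mathcomp Require Import all_boot all_order all_algebra.
Set Implicit Arguments. Unset Strict Implicit. Unset Printing Implicit Defensive.
Import GRing.Theory Num.Theory.
Local Open Scope ring_scope.

Section Digraph.
Variables (V E : finType) (src tgt : E -> V).

Definition arc_rel : rel V := fun u v => [exists e, (src e == u) && (tgt e == v)].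

Definition dconnected : Prop :=
  forall u v : V, connect (fun x y => arc_rel x y || arc_rel y x) u v.

Definition eulerian : Prop :=
  forall v : V, #|[set e | src e == v]| = #|[set e | tgt e == v]|.

Definition dir_cycle (p : seq E) : bool :=
  (p != [::]) && cycle (fun e f => tgt e == src f) p.

Definition feedback_arc_set (F : {set E}) : Prop :=
  forall p : seq E, dir_cycle p -> has (fun e => e \in F) p.

Definition is_minfas (m : nat) : Prop :=
  (exists F : {set E}, feedback_arc_set F /\ #|F| = m) /\
  (forall F : {set E}, feedback_arc_set F -> (m <= #|F|)%N).

Definition parking (s : V) (f : V -> nat) : bool :=
  (f s == 0%N) &&
  [forall A : {set V}, ((A != set0) && (s \notin A)) ==>
     [exists v in A, (f v < #|[set e | (src e == v) && (tgt e \notin A)]|)%N]].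

(* parking function enumerator  park_{G,s}(y) = sum_f y^{|f|}.
   Every parking function takes values <= #|E| (take A = {v}),
   so ranging over functions V -> 'I_(#|E|.+1) enumerates all of them. *)
Definition park (s : V) : {poly int} :=
  \sum_(x : {ffun V -> 'I_(#|E|.+1)} | parking s (fun v => nat_of_ord (x v)))
     'X^(\sum_(v : V) nat_of_ord (x v)).

End Digraph.

From mathcomp Require Import all_boot all_order all_algebra.
From mathcomp Require Import zify.

(* A ranking is a map r : V -> nat.  Its up-arcs (r src <= r tgt) always form
   a feedback arc set, and every feedback arc set F contains the up-arcs of
   some ranking (rank a vertex by the number of arcs reachable from it in
   G - F); hence minfas(G) = m is the least number of up-arcs of a ranking.
   Write down_r(v) for the arcs leaving v towards a strictly smaller rank, so
   that sum_v |down_r(v)| + |up-arcs of r| = |E|.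

   Upper bound: for a parking function f the burning algorithm yields a
   ranking with f v < |down_r(v)| for all v <> s, whence
   sum f + |V| - 1 + m <= |E|.
   Lower bound: on an Eulerian digraph, lifting a vertex set B above all
   other ranks does not create new up-arcs provided no arc leaves B downwards
   (there are as many arcs entering B as leaving it).  Starting from an
   optimal ranking with s at the bottom, repeated lifts of the vertices from
   which s cannot be reached along down-arcs (connectivity guarantees that
   the lift enlarges that set) give an optimal ranking in which every vertex
   reaches s by down-arcs.  Then v |-> |down_r(v)| - 1 is a parking function
   of weight |E| - |V| + 1 - m.  Since the enumerator is a sum of monomials
   with positive coefficients, its degree is this maximal weight. *)

Set Implicit Arguments. Unset Strict Implicit. Unset Printing Implicit Defensive.

Section Monomials.
Local Open Scope ring_scope.

Lemma size_sum_monomials (R : numDomainType) (I : finType) (P : pred I)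
    (d : I -> nat) (i0 : I) :
  P i0 -> (forall i, P i -> (d i <= d i0)%N) ->
  size (\sum_(i | P i) 'X^(d i) : {poly R}) = (d i0).+1.
Proof.
move=> Pi0 dmax.
have coefE j : (\sum_(i | P i) 'X^(d i) : {poly R})`_j =
               (\sum_(i | P i) (j == d i))%:R.
  by rewrite coef_sum GRing.natr_sum; apply: eq_bigr => i _; rewrite coefXn.
apply/anti_leq/andP; split.
  apply/leq_sizeP => j hj; rewrite coefE big1 // => i Pi.
  by rewrite gtn_eqF // (leq_ltn_trans (dmax i Pi)).
rewrite ltnNge; apply/negP => /leq_sizeP/(_ _ (leqnn _))/eqP.
by rewrite coefE Num.Theory.pnatr_eq0 (bigD1 i0) //= eqxx.
Qed.

End Monomials.

Lemma connect_transfer (T : finType) (e e' : rel T) (z x : T) :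
  (forall u v, e u v -> connect e v z -> e' u v) ->
  connect e x z -> connect e' x z.
Proof.
move=> he /connectP[p]; elim: p x => [|y p IH] x /=; first by move=> _ ->.
case/andP=> exy pyp lz; apply: connect_trans (connect1 (he _ _ exy _)) (IH _ pyp lz).
by apply/connectP; exists p.
Qed.

Section Digraph.
Variables (V E : finType) (src tgt : E -> V).

Definition up_arcs (r : V -> nat) : {set E} := [set e | r (src e) <= r (tgt e)].
Definition down_arcs (r : V -> nat) (v : V) : {set E} :=
  [set e | (src e == v) && (r (tgt e) < r v)].

Definition leaving (B : {set V}) : {set E} :=
  [set e | (src e \in B) && (tgt e \notin B)].

Lemma leavingE B e : (e \in leaving B) = (src e \in B) && (tgt e \notin B).
Proof. by rewrite inE. Qed.

Definition lift (B : {set V}) (K : nat) (r : V -> nat) : V -> nat :=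
  fun v => if v \in B then r v + K else r v.

Lemma rank_lt_max (r : V -> nat) v : r v < (\max_w r w).+1.
Proof. by rewrite ltnS; exact: leq_bigmax. Qed.

Lemma card_fibers (g : E -> V) (P : pred E) (B : {set V}) :
  #|[set e | P e && (g e \in B)]| = \sum_(v in B) #|[set e | P e && (g e == v)]|.
Proof.
rewrite -sum1dep_card (partition_big g (mem B)) /=; last by move=> e /andP[].
apply: eq_bigr => v vB; rewrite -sum1dep_card; apply: eq_bigl => e.
by case: eqP => [->|]; rewrite ?vB ?andbT ?andbF.
Qed.

Lemma down_up_partition r : \sum_v #|down_arcs r v| + #|up_arcs r| = #|E|.
Proof.
rewrite -(cardsC (up_arcs r)) addnC; congr (_ + _).
have := card_fibers src [pred e | r (tgt e) < r (src e)] setT.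
have -> : [set e | [pred e | r (tgt e) < r (src e)] e && (src e \in setT)] =
          ~: up_arcs r by apply/setP => e; rewrite !inE andbT ltnNge.
move=> ->; apply: eq_big => [v|v _]; first by rewrite inE.
apply: eq_card => e; rewrite !inE /=.
by case: eqP => [->|]; rewrite ?andbT ?andbF.
Qed.

Section Eulerian.
Hypothesis Heul : eulerian src tgt.

Lemma eulerian_balance (B : {set V}) : #|leaving B| = #|leaving (~: B)|.
Proof.
pose S := [set e | src e \in B]; pose T := [set e | tgt e \in B].
have ST : #|S| = #|T|.
  rewrite (_ : S = [set e | predT e && (src e \in B)]) //.
  rewrite (_ : T = [set e | predT e && (tgt e \in B)]) //.
  by rewrite !card_fibers; apply: eq_bigr => v _; exact: Heul.
have leaveB : S :\: T = leaving B by apply/setP => e; rewrite !inE andbC.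
have enterB : T :\: S = leaving (~: B) by apply/setP => e; rewrite !inE negbK.
have := cardsID T S; have := cardsID S T.
by rewrite leaveB enterB setIC ST => <-; lia.
Qed.

(* Lifting B above every other rank creates no new up-arc when every arc
   leaving B goes weakly up: the arcs entering B, now up, are exactly as
   many as the arcs leaving B, now down. *)
Lemma lift_up_arcs (B : {set V}) K r :
  (forall v, r v < K) ->
  (forall e, e \in leaving B -> r (src e) <= r (tgt e)) ->
  #|up_arcs (lift B K r)| <= #|up_arcs r|.
Proof.
move=> hK hout.
have sub : up_arcs (lift B K r) \subset (up_arcs r :\: leaving B) :|: leaving (~: B).
  apply/subsetP => e; rewrite !inE /lift.
  case: (src e \in B); case: (tgt e \in B); rewrite /= ?leq_add2r ?orbF ?orbT //.
  by move=> up; have := leq_ltn_trans up (hK (tgt e)); rewrite ltnNge leq_addl.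
have outsub : leaving B \subset up_arcs r.
  by apply/subsetP => e eB; rewrite inE hout.
have := subset_leq_card outsub; have := subset_leq_card sub.
by rewrite cardsU cardsD (setIidPr outsub) -eulerian_balance; lia.
Qed.

Lemma leaving_arc (B : {set V}) u w :
  dconnected src tgt -> u \in B -> w \notin B -> exists e, e \in leaving B.
Proof.
move=> Hconn uB wB; case: (set_0Vmem (leaving B)) => [L0|[e eB]]; last by exists e.
have E0 : leaving (~: B) = set0.
  by apply/cards0_eq; rewrite -eulerian_balance L0 cards0.
have arc_closed e : (src e \in B) = (tgt e \in B).
  apply/idP/idP => h; apply/negPn/negP => h'.
  - by have := in_set0 e; rewrite -L0 inE h h'.
  - by have := in_set0 e; rewrite -E0 !inE h h'.
have closedB : closed (fun x y => arc_rel src tgt x y || arc_rel src tgt y x) (mem B).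
  by move=> x y /orP[]/existsP[e /andP[/eqP <- /eqP <-]]; rewrite arc_closed.
by have := closed_connect closedB (Hconn u w); rewrite uB (negbTE wB).
Qed.

End Eulerian.

(* The up-arcs of any ranking form a feedback arc set: a directed cycle
   of down-arcs would have to descend at the arc of largest source rank. *)
Lemma up_arcs_fas r : feedback_arc_set src tgt (up_arcs r).
Proof.
move=> p /andP[pn cyc]; apply/hasP.
have [x0 x0p] : exists x, x \in p.
  by case: p pn {cyc} => // x p _; exists x; rewrite inE eqxx.
case: (arg_maxnP (fun e => r (src e)) x0p) => x xp xmax.
exists (prev p x); first by rewrite mem_prev.
have /eqP tgt_prev := prev_cycle cyc xp.
by rewrite inE tgt_prev; apply: xmax; exact: etrans (mem_prev p x) xp.
Qed.

Definition avoid_succ (F : {set E}) : rel E :=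
  fun e e' => (tgt e == src e') && (e' \notin F).
Definition reach_arcs (F : {set E}) (v : V) : {set E} :=
  [set e' | [exists e, [&& src e == v, e \notin F & connect (avoid_succ F) e e']]].

Lemma path_avoids F x p : path (avoid_succ F) x p -> all (fun y => y \notin F) p.
Proof. by elim: p x => //= y p IH x /andP[/andP[_ ->] /IH]. Qed.

Lemma reach_arcs_decrease F : feedback_arc_set src tgt F ->
  forall e, e \notin F -> #|reach_arcs F (tgt e)| < #|reach_arcs F (src e)|.
Proof.
move=> hF e eF; apply: proper_card; apply/properP; split.
  apply/subsetP => x; rewrite !inE => /existsP[e1 /and3P[/eqP h1 h2 h3]].
  apply/existsP; exists e; rewrite eqxx eF /=.
  by apply: connect_trans h3; apply: connect1; rewrite /avoid_succ h1 eqxx h2.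
exists e; first by rewrite inE; apply/existsP; exists e; rewrite eqxx eF connect0.
rewrite inE; apply/existsP => -[e1 /and3P[/eqP h1 h2 /connectP[p hp hl]]].
have cyc : cycle (avoid_succ F) (e1 :: p).
  by rewrite /= rcons_path hp /= -hl /avoid_succ h1 eqxx h2.
have dcyc : dir_cycle src tgt (e1 :: p).
  by rewrite /dir_cycle /=; apply: sub_cycle cyc => a b /andP[].
have := hF _ dcyc; rewrite /= (negbTE h2) /= => /hasP[y yp yF].
by have := allP (path_avoids hp) y yp; rewrite yF.
Qed.

Lemma fas_ranking F : feedback_arc_set src tgt F ->
  exists r, up_arcs r \subset F.
Proof.
move=> hF; exists (fun v => #|reach_arcs F v|).
apply/subsetP => e; rewrite inE; apply: contraTT => eF.
by rewrite -ltnNge reach_arcs_decrease.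
Qed.

Lemma minfas_le_up m : is_minfas src tgt m -> forall r, m <= #|up_arcs r|.
Proof. by case=> _ hm r; apply/hm/up_arcs_fas. Qed.

Lemma minfas_ranking m : is_minfas src tgt m -> exists r, #|up_arcs r| <= m.
Proof.
case=> [[F [hF <-]] _]; have [r rF] := fas_ranking hF.
by exists r; apply: subset_leq_card.
Qed.

Section Sink.
Variables (s : V) (m : nat).
Hypotheses (Hconn : dconnected src tgt) (Heul : eulerian src tgt)
  (Hm : is_minfas src tgt m).

Lemma sum_nonsink : \sum_v (v != s : nat) = #|V|.-1.
Proof.
rewrite -(cardC1 s) -sum1_card [RHS]big_mkcond /=.
by apply: eq_bigr => v _; rewrite !inE; case: (v != s).
Qed.

Lemma parking_ranking_on f (A : {set V}) : parking src tgt s f -> s \notin A ->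
  exists r, forall v, v \in A -> f v < #|down_arcs r v|.
Proof.
case/andP=> _ /forallP hA; move Hk: #|A| => k; elim: k A Hk => [|k IH] A hk sA.
  by exists (fun _ => 0) => v; rewrite (cards0_eq hk) inE.
have A0 : A != set0 by rewrite -card_gt0 hk.
have := hA A; rewrite A0 sA /= => /existsP[v0 /andP[v0A hv0]].
have card' : #|A :\ v0| = k by move: hk; rewrite (cardsD1 v0) v0A => -[].
have sA' : s \notin A :\ v0 by rewrite !inE negb_and sA orbT.
have [r' hr'] := IH _ card' sA'.
exists (fun v => if v \in A then (r' v).+1 else 0) => v vA.
case: (eqVneq v v0) => [->|vv0].
  apply: leq_trans hv0 _; apply: subset_leq_card; apply/subsetP => e.
  by rewrite !inE => /andP[/eqP-> tA]; rewrite eqxx (negbTE tA) v0A.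
have vA' : v \in A :\ v0 by rewrite !inE vv0 vA.
apply: leq_trans (hr' _ vA') _; apply: subset_leq_card; apply/subsetP => e.
by rewrite !inE => /andP[/eqP-> lt]; rewrite eqxx vA; case: ifP.
Qed.

Lemma parking_weight_bound f : parking src tgt s f ->
  \sum_v f v + #|V|.-1 + m <= #|E|.
Proof.
move=> pf; have fs : f s = 0 by case/andP: pf => /eqP.
have sA : s \notin [set v | v != s] by rewrite inE eqxx.
have [r hr] := parking_ranking_on pf sA.
rewrite -(down_up_partition r) -sum_nonsink -big_split leq_add ?minfas_le_up //.
apply: leq_sum => v _; case: eqVneq => [->|vs]; first by rewrite fs.
by rewrite /= addn1 hr // inE.
Qed.

Lemma parking_ext (f g : V -> nat) :
  f =1 g -> parking src tgt s f = parking src tgt s g.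
Proof.
move=> fg; rewrite /parking fg; congr (_ && _); apply: eq_forallb => A.
by congr (_ ==> _); apply: eq_existsb => v; rewrite fg.
Qed.

Definition down_rel (r : V -> nat) : rel V :=
  fun u v => arc_rel src tgt u v && (r v < r u).
Definition descending (r : V -> nat) : {set V} :=
  [set v | connect (down_rel r) v s].

Lemma descendingE r v : (v \in descending r) = connect (down_rel r) v s.
Proof. by rewrite inE. Qed.

Lemma down_rel_arc r e : r (tgt e) < r (src e) -> down_rel r (src e) (tgt e).
Proof. by move=> lt; rewrite /down_rel lt andbT; apply/existsP; exists e; rewrite !eqxx. Qed.

(* An optimal ranking with the sink at the bottom: lift the vertices
   ranked below s; every arc leaving them goes up. *)
Lemma sink_min_ranking : exists r, #|up_arcs r| <= m /\ (forall v, r s <= r v).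
Proof.
have [r0 r0m] := minfas_ranking Hm.
pose K := (\max_v r0 v).+1; pose B := [set v | r0 v < r0 s].
exists (lift B K r0); split.
  apply: leq_trans r0m; apply: lift_up_arcs => // [v|e]; first exact: rank_lt_max.
  by rewrite !inE -leqNgt => /andP[a b]; exact/ltnW/(leq_trans a b).
move=> v; rewrite /lift !inE ltnn; case: ltnP => // _.
exact: leq_trans (ltnW (rank_lt_max r0 s)) (leq_addl _ _).
Qed.

Lemma descending_grows r : #|up_arcs r| <= m -> (forall v, r s <= r v) ->
  descending r != setT ->
  exists r', [/\ #|up_arcs r'| <= m, (forall v, r' s <= r' v) &
                 #|descending r| < #|descending r'|].
Proof.
move=> rm rmin Dn.
have sD : s \in descending r by rewrite descendingE connect0.
have /subsetPn[c _ cD] : ~~ (setT \subset descending r) by rewrite subTset.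
have cC : c \in ~: descending r by rewrite in_setC.
have sC : s \notin ~: descending r by rewrite in_setC negbK.
have [e0] := leaving_arc Heul Hconn cC sC.
rewrite leavingE !in_setC negbK => /andP[se0 te0].
pose r' := lift (~: descending r) (\max_v r v).+1 r.
have r'D v : v \in descending r -> r' v = r v.
  by move=> vD; rewrite /r' /lift inE vD.
have ascend e : e \in leaving (~: descending r) -> r (src e) <= r (tgt e).
  rewrite leavingE !in_setC negbK => /andP[sD' tD].
  rewrite leqNgt; apply: contra sD' => lt; rewrite descendingE.
  by apply: connect_trans (connect1 (down_rel_arc lt)) _; rewrite -descendingE.
have grow : descending r \subset descending r'.
  apply/subsetP => v; rewrite !descendingE; apply: connect_transfer => x y xy ys.
  have yD : y \in descending r by rewrite descendingE.
  have xD : x \in descending r.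
    by rewrite descendingE (connect_trans (connect1 xy)).
  by move: xy; rewrite /down_rel !r'D.
have newv : src e0 \in descending r'.
  have down0 : r' (tgt e0) < r' (src e0).
    rewrite r'D // /r' /lift inE se0.
    exact: leq_trans (rank_lt_max r (tgt e0)) (leq_addl _ _).
  rewrite descendingE; apply: connect_trans (connect1 (down_rel_arc down0)) _.
  by rewrite -descendingE (subsetP grow).
exists r'; split.
- exact: leq_trans (lift_up_arcs Heul (rank_lt_max r) ascend) rm.
- move=> v; rewrite r'D //; apply: leq_trans (rmin v) _.
  by rewrite /r' /lift; case: ifP => // _; exact: leq_addr.
- by apply: proper_card; apply/properP; split => //; exists (src e0).
Qed.

Lemma spanning_ranking : exists r,
  [/\ #|up_arcs r| <= m, (forall v, r s <= r v) & descending r = setT].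
Proof.
have [r0 [r0m r0min]] := sink_min_ranking.
suff: forall n r, #|V| - #|descending r| <= n -> #|up_arcs r| <= m ->
    (forall v, r s <= r v) ->
    exists r, [/\ #|up_arcs r| <= m, (forall v, r s <= r v) & descending r = setT].
  by move/(_ #|V| r0 (leq_subr _ _) r0m r0min).
elim=> [|n IH] r hn rm rmin.
  exists r; split=> //; apply/eqP; rewrite eqEcard subsetT cardsT; lia.
case: (eqVneq (descending r) setT) => [Dall|Dn]; first by exists r.
have [r' [r'm r'min grow]] := descending_grows rm rmin Dn.
by apply: IH r'm r'min; lia.
Qed.

Lemma down_arcs_sink r : (forall v, r s <= r v) -> down_arcs r s = set0.
Proof.
move=> rmin; apply/setP => e; rewrite !inE.
by case: eqP => //= _; rewrite ltnNge rmin.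
Qed.

Lemma down_arcs_descending r v :
  v \in descending r -> v != s -> down_arcs r v != set0.
Proof.
rewrite descendingE => /connectP[[|w p] /=]; first by move=> _ ->; rewrite eqxx.
case/andP=> /andP[/existsP[e /andP[/eqP se /eqP te]] lt] _ _ _.
by apply/set0Pn; exists e; rewrite inE se eqxx te lt.
Qed.

Lemma ranking_parking r : (forall v, r s <= r v) -> descending r = setT ->
  parking src tgt s (fun v => #|down_arcs r v|.-1).
Proof.
move=> rmin Dall; apply/andP; split; first by rewrite down_arcs_sink ?cards0.
apply/forallP => A; apply/implyP => /andP[/set0Pn[a aA] sA].
case: (arg_minnP r aA) => v vA vmin.
apply/existsP; exists v; apply/andP; split; first exact: vA.
have vs : v != s by apply: contraNneq sA => <-.
rewrite prednK ?card_gt0 ?down_arcs_descending ?Dall ?inE //.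
apply: subset_leq_card; apply/subsetP => e; rewrite !inE => /andP[-> lt] /=.
by apply/negP => tA; have := vmin _ tA; rewrite leqNgt lt.
Qed.

Lemma ranking_weight r : (forall v, r s <= r v) -> descending r = setT ->
  \sum_v #|down_arcs r v|.-1 + #|V|.-1 + #|up_arcs r| = #|E|.
Proof.
move=> rmin Dall.
rewrite -(down_up_partition r) -sum_nonsink -big_split; congr (_ + _).
apply: eq_bigr => v _; case: eqVneq => [->|vs]; first by rewrite down_arcs_sink ?cards0.
by rewrite /= addn1 prednK // card_gt0 down_arcs_descending // Dall inE.
Qed.

Lemma optimal_parking : exists2 x : {ffun V -> 'I_#|E|.+1},
  parking src tgt s (fun v => x v) & \sum_v x v + #|V|.-1 + m = #|E|.
Proof.
have [r [rm rmin Dall]] := spanning_ranking.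
have rm' : #|up_arcs r| = m by apply/eqP; rewrite eqn_leq rm minfas_le_up.
pose g v := #|down_arcs r v|.-1.
have gE v : g v < #|E|.+1 by rewrite ltnS (leq_trans (leq_pred _)) ?max_card.
exists [ffun v => Ordinal (gE v)].
  by rewrite (parking_ext (g := g)) ?ranking_parking // => v; rewrite ffunE.
under eq_bigr do rewrite ffunE /=.
by rewrite -rm'; exact: ranking_weight.
Qed.

End Sink.
End Digraph.

Local Open Scope ring_scope.

Theorem theorem1p5 (V E : finType) (src tgt : E -> V) (s : V)
  (Hconn : dconnected src tgt) (Heul : eulerian src tgt) (m : nat)
  (Hm : is_minfas src tgt m) :
  ((size (park src tgt s)).-1 : int) = (#|E| : int) - (#|V| : int) + 1 - (m : int).
Proof.
have [x0 px0 wx0] := optimal_parking s Hconn Heul Hm.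
have sum_nat_ring (x : {ffun V -> 'I_#|E|.+1}) :
  (\sum_v nat_of_ord (x v))%R = (\sum_v nat_of_ord (x v))%N by [].
rewrite /park (size_sum_monomials
  (P := fun x : {ffun V -> 'I_#|E|.+1} => parking src tgt s (fun v => nat_of_ord (x v)))
  (d := fun x : {ffun V -> 'I_#|E|.+1} => \sum_v nat_of_ord (x v)) _ px0) => [|x px]; last first.
  by rewrite /= !sum_nat_ring; have := parking_weight_bound Hm px; lia.
have : (0 < #|V|)%N by apply/card_gt0P; exists s.
by rewrite sum_nat_ring; lia.
Qed.
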